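(* Let $\mathcal J$ be an $n\times n$ signed symbolic matrix with negative diagonal entries, and let $G$ be its J-graph. Fix nodes $i\neq j$, designating $i$ as input and $j$ as output, and let $\mathcal J[\hat i,\hat j]$ denote the minor obtained by deleting row $i$ and column $j$. Then: (1) $\mathcal J[\hat i,\hat j]$ is identically zero if and only if $G$ has no path from $i$ to $j$. (2) Suppose $G$ has a path from $i$ to $j$. Then $\mathcal J[\hat i,\hat j]$ has mixed signs if and only if either $G$ has an incoherent feedforward loop from $i$ to $j$, or $G$ has a positive feedback loop and a path from $i$ to $j$ that are vertex-disjoint.
   Context: A signed symbolic matrix is a matrix whose $(k,l)$ entry is either $a_{kl}$, $-a_{kl}$, or $0$, where the $a_{kl}$ are distinct variables; ''negative diagonal'' means the $(k,k)$ entry is $-a_{kk}$ for every $k$. A polynomial in the $a_{kl}$ has mixed signs if, after all cancellations, it has at least one monomial with positive coefficient and at least one with negative coefficient. The J-graph $G$ of $\mathcal J$ is the signed directed graph on nodes $1,\ldots,n$ with a positive (resp. negative) edge from $k$ to $l$ iff the $(l,k)$ entry of $\mathcal J$ is $a_{lk}$ (resp. $-a_{lk}$), and no edge otherwise. A path is a walk with no repeated vertices except possibly first = last, in which case it is a cycle; the sign of a set of edges is the product of their signs. A feedback loop is a cycle of length at least two; it is positive if its sign is positive. A feedforward loop from $i$ to $j$ ($j\ne i$) is a pair of distinct paths $P_1\neq P_2$ both starting at $i$ and ending at $j$; it is incoherent if $P_1$ and $P_2$ have opposite signs. *)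

From HB Require Import structures.
From mathcomp Require Import all_boot all_order all_algebra.
From mathcomp Require Import mpoly.
Set Implicit Arguments. Unset Strict Implicit. Unset Printing Implicit Defensive.
Import Order.TTheory GRing.Theory Num.Theory.
Local Open Scope ring_scope.

(* A sign pattern on n nodes: S k l in {-1,0,1} is the sign of entry (k,l). *)
Section Defs.
Variable n : nat.
Implicit Types (S : 'I_n -> 'I_n -> int).

Definition symb_var (k l : 'I_n) : {mpoly int[n * n]} := 'X_(mxvec_index k l).

Definition symb_mx S : 'M[{mpoly int[n * n]}]_n :=
  \matrix_(k, l) ((S k l)%:~R * symb_var k l).

(* J-graph: edge from k to l iff entry (l,k) is nonzero; its sign is S l k. *)
Definition jedge S : rel 'I_n := fun k l => S l k != 0.

Definition is_path S (i j : 'I_n) (p : seq 'I_n) : bool :=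
  match p with
  | [::] => false
  | x :: q => [&& x == i, last x q == j, uniq p & path (jedge S) x q]
  end.

Definition path_sign S (p : seq 'I_n) : int :=
  \prod_(e <- zip p (behead p)) S e.2 e.1.

Definition is_feedback_loop S (c : seq 'I_n) : bool :=
  [&& 1 < size c, uniq c & cycle (jedge S) c]%N.

Definition cycle_sign S (c : seq 'I_n) : int :=
  \prod_(e <- zip c (rot 1 c)) S e.2 e.1.

End Defs.

Definition minor_del (m : nat) (S : 'I_m.+1 -> 'I_m.+1 -> int) (i j : 'I_m.+1)
  : {mpoly int[m.+1 * m.+1]} :=
  \det (row' i (col' j (symb_mx S))).

Definition mixed_signs (k : nat) (p : {mpoly int[k]}) : Prop :=
  (exists m1, 0 < p@_m1) /\ (exists m2, p@_m2 < 0).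

From mathcomp Require Import all_boot all_order all_algebra.
From mathcomp Require Import fingroup perm mpoly.
From Stdlib Require Import Classical.
Set Implicit Arguments. Unset Strict Implicit. Unset Printing Implicit Defensive.
Import Order.TTheory GRing.Theory Num.Theory.

(* Replacing column j of the symbolic matrix by the i-th unit vector turns the
   minor into +/- a determinant whose Leibniz terms are indexed by the
   permutations r with r j = i.  Distinct such r give distinct monomials, so
   nothing cancels and the signs of the minor are those of the coefficients
   perm_coef r.  Such a coefficient is nonzero iff G has every edge l -> r l
   (l != j); the orbit of i is then a path from i to j and the other orbits
   are fixed points and feedback loops disjoint from it.  As the diagonal is
   negative, once the sign of r is spread over its orbits a fixed point
   contributes a factor 1 and a loop of sign s a factor -s: up to a global
   sign, the coefficient is the sign of the path, flipped once per positive
   loop.  Conversely a path, alone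
   or together with a disjoint positive loop, is realised by a permutation,
   and the two coefficients have opposite signs. *)

Lemma next_notin (T : eqType) (s : seq T) x : x \notin s -> next s x = x.
Proof. by move=> xs; rewrite next_nth (negbTE xs). Qed.

Section Trajectories.
Variable T : finType.
Implicit Types (f : T -> T) (s : {perm T}) (x : T).

Lemma map_traject f x n : map f (traject f x n) = traject f (f x) n.
Proof. by elim: n x => //= n IH x; rewrite IH. Qed.

Lemma zip_traject f x n :
  zip (traject f x n.+1) (behead (traject f x n.+1)) =
  [seq (y, f y) | y <- traject f x n].
Proof. by elim: n x => [|n IH] x //=; rewrite -IH. Qed.

Lemma rot1_traject f x n :
  iter n f x = x -> rot 1 (traject f x n) = map f (traject f x n).
Proof.
case: n => [|n] // fx.
by rewrite map_traject [in LHS]trajectS rot1_cons [in RHS]trajectSr -iterSr fx.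
Qed.

Lemma path_traject (e : rel T) f x n :
  {in traject f x n, forall y, e y (f y)} -> path e x (traject f (f x) n).
Proof.
elim: n x => [|n IH] x exf //=.
by rewrite exf ?mem_head //= IH // => y y_in; apply: exf; rewrite inE y_in orbT.
Qed.

Lemma cycle_traject (e : rel T) f x n : iter n.+1 f x = x ->
  {in traject f x n.+1, forall y, e y (f y)} -> path.cycle e (traject f x n.+1).
Proof.
move=> fx exf; rewrite trajectS /=.
have -> : rcons (traject f (f x) n) x = traject f (f x) n.+1.
  by rewrite trajectSr -iterSr fx.
exact: path_traject.
Qed.

Lemma porbit_next s x0 p : uniq (x0 :: p) ->
    {in x0 :: p, forall y, s y = next (x0 :: p) y} ->
  [/\ #|porbit s x0| = (size p).+1, traject s x0 (size p).+1 = x0 :: p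
    & porbit s x0 =i x0 :: p].
Proof.
set q := x0 :: p => Uq sq.
have iterE t : t < size q -> iter t s x0 = nth x0 q t.
  elim: t => [//|t IH] ltq; rewrite iterS IH ?(ltnW ltq) // sq ?mem_nth ?(ltnW ltq) //.
  by rewrite next_nth mem_nth ?(ltnW ltq) // index_uniq ?(ltnW ltq).
have trajE : traject s x0 (size q) = q.
  apply: (@eq_from_nth _ x0); rewrite ?size_traject // => k ltk.
  by rewrite nth_traject // iterE.
have iter_in k : iter k s x0 \in q.
  by elim: k => [|k IH]; rewrite ?mem_head // iterS sq // mem_next.
have orbitE : porbit s x0 =i q.
  move=> y; apply/porbitP/idP => [[k ->]|yq]; first by rewrite permX iter_in.
  by exists (index y q); rewrite permX iterE ?index_mem // nth_index.
by split=> //; rewrite (eq_card orbitE); exact: card_uniqP.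
Qed.

End Trajectories.

Local Open Scope ring_scope.

Definition sign_val (x : int) : bool := x \in [:: -1; 0; 1].

Lemma sign_valM x y : sign_val x -> sign_val y -> sign_val (x * y).
Proof. by rewrite /sign_val !inE => /or3P[] /eqP-> /or3P[] /eqP->. Qed.

Lemma sign_val_prod (I : Type) (s : seq I) (P : pred I) (F : I -> int) :
  (forall k, P k -> sign_val (F k)) -> sign_val (\prod_(k <- s | P k) F k).
Proof. by move=> sF; apply: (big_ind sign_val) => //; apply: sign_valM. Qed.

Lemma sign_val_neq0 x : sign_val x -> x != 0 -> x = 1 \/ x = -1.
Proof. by rewrite /sign_val !inE => /or3P[] /eqP->; auto. Qed.

Lemma sign_val_mul_lt0 x y : sign_val x -> sign_val y -> x * y < 0 -> x = - y.
Proof. by rewrite /sign_val !inE => /or3P[] /eqP-> /or3P[] /eqP->. Qed.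

Lemma exists_pos_neg_opp (I : Type) (R : realDomainType) (F : I -> R) x y :
  F x != 0 -> F y = - F x -> (exists r, 0 < F r) /\ (exists r, F r < 0).
Proof.
move=> + Fy; rewrite neq_lt => /orP[neg|pos].
  by split; [exists y; rewrite Fy oppr_gt0 | exists x].
by split; [exists x | exists y; rewrite Fy oppr_lt0].
Qed.

Lemma psumr_exists_gt0 (R : realDomainType) (I : finType) (F : I -> R) :
  0 < \sum_r F r -> exists r, 0 < F r.
Proof.
have [/existsP[r Fr _]|/existsPn noF] := boolP [exists r, 0 < F r]; first by exists r.
by rewrite ltNge sumr_le0 // => r _; rewrite leNgt noF.
Qed.

Lemma mxvec_index_inj (p q : nat) (k k' : 'I_p) (l l' : 'I_q) :
  mxvec_index k l = mxvec_index k' l' -> k = k' /\ l = l'.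
Proof. by rewrite /mxvec_index => /cast_ord_inj /enum_rank_inj [-> ->]. Qed.

Lemma mixed_signsN (k : nat) (P : {mpoly int[k]}) :
  mixed_signs (- P) <-> mixed_signs P.
Proof.
by split=> [[[a Pa] [b Pb]]|[[a Pa] [b Pb]]]; split; [exists b|exists a|exists b|exists a];
  move: Pa Pb; rewrite !mcoeffN ?oppr_gt0 ?oppr_lt0.
Qed.

Section PermCoef.
Variables (N : nat) (S : 'I_N -> 'I_N -> int) (i j : 'I_N).
Implicit Types (r : {perm 'I_N}).

Definition perm_coef r : int :=
  if r j == i then (-1) ^+ r * \prod_(l | l != j) S (r l) l else 0.

Lemma perm_coef_neq0_j r : perm_coef r != 0 -> r j = i.
Proof. by rewrite /perm_coef; case: (r j =P i) => // _; rewrite eqxx. Qed.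

Lemma perm_coef_edges r : perm_coef r != 0 -> forall l, l != j -> S (r l) l != 0.
Proof.
rewrite /perm_coef; case: (r j =P i) => _; last by rewrite eqxx.
by rewrite mulf_eq0 negb_or => /andP[_ /prodf_neq0].
Qed.

End PermCoef.

Section MinorDeterminant.
Variables (m : nat) (S : 'I_m.+1 -> 'I_m.+1 -> int) (i j : 'I_m.+1).
Local Notation N := m.+1.
Local Notation coef := (perm_coef S i j).

Definition minor_mx : 'M[{mpoly int[N * N]}]_N :=
  \matrix_(k, l) if l == j then (k == i)%:R else symb_mx S k l.

Lemma minor_delE : minor_del S i j = (-1) ^+ (i + j) * \det minor_mx.
Proof.
rewrite (expand_det_col minor_mx j) (bigD1 i) //= big1 ?addr0; last first.
  by move=> k ki; rewrite mxE eqxx (negbTE ki) mul0r.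
rewrite mxE !eqxx mul1r /cofactor mulrA -expr2 sqrr_sign mul1r.
congr (\det _); apply/matrixP => k l.
by rewrite !mxE eq_sym (negbTE (neq_lift j l)).
Qed.

Definition perm_mnm (r : 'S_N) : 'X_{1..N * N} :=
  (\big[+%MM/0%MM]_(l | l != j) U_(mxvec_index (r l) l))%MM.

Lemma det_minor_mx : \det minor_mx = \sum_(r : 'S_N) 'X_[perm_mnm r] *~ coef r.
Proof.
rewrite -det_tr; apply: eq_bigr => r _; rewrite (bigD1 j) //= !mxE eqxx /perm_coef.
case: eqP => [rj|_]; last by rewrite mul0r mulr0 mulr0z.
rewrite mul1r (eq_bigr (fun l => (S (r l) l)%:~R * 'X_[U_(mxvec_index (r l) l)])).
  rewrite big_split /= (big_morph _ (@mpolyXD _ _) (@mpolyX0 _ _)) -rmorph_prod /=.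
  by rewrite mulrA -[RHS]mulrzr intrM intr_sign mulrC.
by move=> l lj; rewrite !mxE (negbTE lj).
Qed.

Lemma mcoeff_det_minor_mx mm :
  (\det minor_mx)@_mm = \sum_(r : 'S_N) coef r * (perm_mnm r == mm)%:R.
Proof.
rewrite det_minor_mx (big_morph (mcoeff mm) (@mcoeffD _ _ mm) (@mcoeff0 _ _ mm)).
by apply: eq_bigr => r _; rewrite -scaler_int intz mcoeffZ mcoeffX.
Qed.

Lemma perm_mnm_inj (r r' : 'S_N) :
  r j = i -> r' j = i -> perm_mnm r = perm_mnm r' -> r = r'.
Proof.
move=> rj r'j E; apply/permP => l; have [->|lj] := eqVneq l j; first by rewrite rj r'j.
have : perm_mnm r (mxvec_index (r l) l) != 0%N.
  by rewrite mnm_sumE (bigD1 l) //= mnm1E eqxx.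
rewrite E mnm_sumE; apply: contraNeq => ne; apply/eqP/big1 => l' _; rewrite mnm1E.
by case: eqP => // /mxvec_index_inj [e1 e2]; subst l'; move: ne; rewrite e1 eqxx.
Qed.

Lemma mcoeff_det_perm_mnm (r : 'S_N) :
  r j = i -> (\det minor_mx)@_(perm_mnm r) = coef r.
Proof.
move=> rj; rewrite mcoeff_det_minor_mx (bigD1 r) //= eqxx mulr1 big1 ?addr0 // => r' ne.
have [->|nz] := eqVneq (coef r') 0; first by rewrite mul0r.
case: eqP => [e|_]; last by rewrite mulr0.
by move: ne; rewrite (perm_mnm_inj (perm_coef_neq0_j nz) rj e) eqxx.
Qed.

Lemma minor_del_eq0 : minor_del S i j = 0 <-> forall r, coef r = 0.
Proof.
rewrite minor_delE; split=> [/eqP|coef0].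
  rewrite mulf_eq0 signr_eq0 => /eqP det0 r.
  have [->//|nz] := eqVneq (coef r) 0.
  by rewrite -mcoeff_det_perm_mnm ?(perm_coef_neq0_j nz) // det0 mcoeff0.
apply/eqP; rewrite mulf_eq0 signr_eq0; apply/eqP/mpolyP => mm.
by rewrite mcoeff_det_minor_mx mcoeff0 big1 // => r _; rewrite coef0 mul0r.
Qed.

Lemma minor_del_mixed : mixed_signs (minor_del S i j) <->
  (exists r, 0 < coef r) /\ (exists r, coef r < 0).
Proof.
have -> : mixed_signs (minor_del S i j) <-> mixed_signs (\det minor_mx).
  by rewrite minor_delE -signr_odd; case: odd; rewrite ?expr1 ?expr0 ?mulN1r ?mixed_signsN ?mul1r.
split=> [[[m1 pos] [m2 neg]]|[[r1 pos] [r2 neg]]].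
  rewrite mcoeff_det_minor_mx in pos; rewrite -oppr_gt0 mcoeff_det_minor_mx -sumrN in neg.
  have [r1] := psumr_exists_gt0 pos; have [r2] := psumr_exists_gt0 neg.
  case: (_ == m2); rewrite ?mulr1 ?mulr0 ?oppr0 ?ltxx // oppr_gt0 => neg2.
  by case: (_ == m1); rewrite ?mulr1 ?mulr0 ?ltxx // => pos1; split; [exists r1|exists r2].
have rj1 := perm_coef_neq0_j (lt0r_neq0 pos); have rj2 := perm_coef_neq0_j (ltr0_neq0 neg).
by split; [exists (perm_mnm r1) | exists (perm_mnm r2)]; rewrite mcoeff_det_perm_mnm.
Qed.

End MinorDeterminant.

Section PermutationsAndPaths.
Variables (N : nat) (S : 'I_N -> 'I_N -> int) (i j : 'I_N).
Implicit Types (r : {perm 'I_N}) (x y : 'I_N).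
Local Notation coef := (perm_coef S i j).

Definition perm_path r := traject r i #|porbit r i|.

Definition path_weight r : int := \prod_(l in porbit r i | l != j) S (r l) l.

Definition orbit_weight r (O : {set 'I_N}) : int := - \prod_(l in O) S (r l) l.

Definition loops_weight r : int :=
  \prod_(O in porbits r | O != porbit r i) orbit_weight r O.

Definition positive_loop_off_path : Prop :=
  exists c p, [/\ is_feedback_loop S c, cycle_sign S c = 1,
                  is_path S i j p & [disjoint c & p]].

Lemma path_sign_neq0 p : is_path S i j p -> path_sign S p != 0.
Proof.
case: p => // x q /and4P[_ _ _]; rewrite /path_sign.
elim: q x => [|y q IH] x /=; first by rewrite big_nil.
by case/andP=> xy yq; rewrite big_cons mulf_neq0 ?IH.
Qed.

Lemma sign_val_path_sign p : (forall k l, sign_val (S k l)) -> sign_val (path_sign S p).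
Proof. by move=> sS; apply: sign_val_prod => e _; apply: sS. Qed.

Lemma porbit_mem_eq r x y : y \in porbit r x -> porbit r y = porbit r x.
Proof. by move=> yx; apply/eqP; rewrite eq_porbit_mem. Qed.

Lemma mem_porbit_j r : r j = i -> j \in porbit r i.
Proof. by move=> rj; rewrite porbit_sym; apply/porbitP; exists 1%N; rewrite expg1 rj. Qed.

Lemma porbit_last r : r j = i ->
  exists n, #|porbit r i| = n.+1 /\ iter n r i = j.
Proof.
move=> rj; have := card_porbit_neq0 r i; case E: #|porbit r i| => [|n] // _.
by exists n; split=> //; apply: (@perm_inj _ r); rewrite rj -iterS -E iter_porbit.
Qed.

Lemma path_sign_perm_path r : r j = i -> path_sign S (perm_path r) = path_weight r.
Proof.
move=> rj; have [n [En last_j]] := porbit_last rj.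
have := uniq_traject_porbit r i; rewrite En trajectSr last_j rcons_uniq => /andP[jn Un].
rewrite /perm_path /path_sign /path_weight En zip_traject big_map [RHS]big_mkcondr /=.
rewrite [RHS](eq_bigl (fun l => l \in traject r i n.+1)); last first.
  by move=> l; rewrite porbit_traject En.
rewrite -big_uniq ?trajectSr ?last_j ?rcons_uniq ?jn // big_rcons /= eqxx mulr1.
by apply: eq_big_seq => l ln; have -> : l != j by apply: contraNneq jn => <-.
Qed.

Lemma is_path_perm_path r : r j = i -> (forall l, l != j -> S (r l) l != 0) ->
  is_path S i j (perm_path r).
Proof.
move=> rj nzS; have [n [En last_j]] := porbit_last rj.
have := uniq_traject_porbit r i; rewrite /perm_path En => Ui.
rewrite trajectS; apply/and4P; split; rewrite -?trajectS ?last_traject ?last_j //.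
apply: path_traject => y yn; apply: nzS.
by move: Ui; rewrite trajectSr last_j rcons_uniq => /andP[jn _]; apply: contraNneq jn => <-.
Qed.

Lemma is_path_perm_coef r : coef r != 0 -> is_path S i j (perm_path r).
Proof. by move=> nz; apply: is_path_perm_path (perm_coef_neq0_j nz) (perm_coef_edges nz). Qed.

Lemma cycle_sign_porbit r x :
  cycle_sign S (traject r x #|porbit r x|) = \prod_(l in porbit r x) S (r l) l.
Proof.
rewrite /cycle_sign rot1_traject ?iter_porbit // -[X in zip X]map_id zip_map big_map.
by rewrite big_uniq ?uniq_traject_porbit //; apply: eq_bigl => l; rewrite -porbit_traject.
Qed.

(* odd_perm r is the parity of N plus the number of orbits of r, so the sign
   of r splits as (-1) ^+ N times one factor -1 per orbit. *)
Lemma perm_coefE r : r j = i ->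
  coef r = - ((-1) ^+ N * (path_weight r * loops_weight r)).
Proof.
move=> rj; rewrite /perm_coef rj eqxx.
have -> : (-1) ^+ r = (-1) ^+ N * (-1) ^+ #|porbits r| :> int.
  by rewrite /odd_perm signr_addb card_ord !signr_odd.
rewrite (partition_big (porbit r) (mem (porbits r))) /=; last first.
  by move=> l _; apply: imset_f.
rewrite -mulrA -prodrN (bigD1 (porbit r i)) /=; last exact: imset_f.
rewrite mulNr mulrN; congr (- (_ * (_ * _))).
  by apply: eq_bigl => l; rewrite andbC eq_porbit_mem.
apply: eq_bigr => _ /andP[/imsetP[x _ ->] ne]; congr (- _).
apply: eq_bigl => l; rewrite eq_porbit_mem.
case lx: (l \in porbit r x); rewrite ?andbF ?andbT //.
apply: contraNneq ne => lj.
by rewrite -(porbit_mem_eq lx) lj (porbit_mem_eq (mem_porbit_j rj)).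
Qed.

Lemma orbit_weight_fixed r x : r x = x -> S x x = -1 -> orbit_weight r (porbit r x) = 1.
Proof.
move=> rx Sx; have orbit_x : porbit r x =i [:: x].
  have [] // := @porbit_next _ r x [::] erefl.
  by move=> y; rewrite inE => /eqP ->; rewrite rx /next /= eqxx.
rewrite /orbit_weight (eq_bigl (pred1 x)); last by move=> l; rewrite orbit_x inE.
by rewrite big_pred1_eq rx Sx opprK.
Qed.

Lemma feedback_loop_porbit r x : {in porbit r x, forall y, S (r y) y != 0} ->
  (1 < #|porbit r x|)%N -> is_feedback_loop S (traject r x #|porbit r x|).
Proof.
move=> nzS; case E: #|porbit r x| => [|n] // ltn1.
rewrite /is_feedback_loop size_traject ltn1 -E uniq_traject_porbit /= E.
apply: cycle_traject; first by rewrite -E iter_porbit.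
by move=> y; rewrite -E -porbit_traject => /nzS.
Qed.

Lemma disjoint_porbit_path r x : porbit r x != porbit r i ->
  [disjoint traject r x #|porbit r x| & perm_path r].
Proof.
move=> ne; apply/pred0P => y /=; apply/negbTE/andP => [[yx yi]].
move: ne; rewrite -porbit_traject in yx; rewrite -porbit_traject in yi.
by rewrite -(porbit_mem_eq yx) (porbit_mem_eq yi) eqxx.
Qed.

Lemma loops_weight1 r : (forall k, S k k = -1) -> (forall k l, sign_val (S k l)) ->
  ~ positive_loop_off_path -> coef r != 0 -> loops_weight r = 1.
Proof.
move=> Sdiag sS noloop nz; have rj := perm_coef_neq0_j nz.
apply: big1 => _ /andP[/imsetP[x _ ->] ne].
have jx : j \notin porbit r x.
  apply: contraNN ne => jx.
  by rewrite -(porbit_mem_eq jx) (porbit_mem_eq (mem_porbit_j rj)).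
have nzx : {in porbit r x, forall y, S (r y) y != 0}.
  by move=> y yx; apply: (perm_coef_edges nz); apply: contraNneq jx => <-.
have [long|short] := ltnP 1 #|porbit r x|.
  have sx : sign_val (\prod_(l in porbit r x) S (r l) l) by apply: sign_val_prod.
  have [pos|neg] := sign_val_neq0 sx (introT (prodf_neq0 _ _) nzx).
    case: noloop; exists (traject r x #|porbit r x|), (perm_path r).
    split; rewrite ?cycle_sign_porbit ?disjoint_porbit_path ?is_path_perm_coef //.
    exact: feedback_loop_porbit.
  by rewrite /orbit_weight neg opprK.
apply: orbit_weight_fixed => //; have := iter_porbit r x.
by case: #|porbit r x| short (card_porbit_neq0 r x) => [|[|]].
Qed.

Section PathLoopPerm.
Variables (p' c : seq 'I_N).
Local Notation p := (i :: p').
Hypotheses (Up : uniq p) (Uc : uniq c) (Dcp : [disjoint c & p]).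

Definition path_loop_fun x := if x \in p then next p x else next c x.

Lemma mem_path_loop_fun x : (path_loop_fun x \in p) = (x \in p).
Proof.
rewrite /path_loop_fun; case xp: (x \in p); first by rewrite mem_next.
case xc: (x \in c); last by rewrite next_notin ?xc ?xp.
by apply: (disjointFr Dcp); rewrite mem_next.
Qed.

Lemma path_loop_fun_inj : injective path_loop_fun.
Proof.
move=> x y exy; have := mem_path_loop_fun x; rewrite exy mem_path_loop_fun => pxy.
move: exy; rewrite /path_loop_fun pxy; case: ifP => _.
  exact: (can_inj (prev_next Up)).
exact: (can_inj (prev_next Uc)).
Qed.

Definition path_loop_perm := perm path_loop_fun_inj.
Local Notation s := path_loop_perm.

Lemma porbit_path_loop_perm : perm_path s = p /\ porbit s i =i p.
Proof.
have [En trajE orbitE] : [/\ #|porbit s i| = (size p').+1,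
    traject s i (size p').+1 = p & porbit s i =i p].
  by apply: porbit_next => // y yp; rewrite permE /path_loop_fun yp.
by rewrite /perm_path En trajE.
Qed.

Lemma loops_weight_path_loop_perm : (forall k, S k k = -1) ->
  loops_weight s = if c is _ :: _ then - cycle_sign S c else 1.
Proof.
move=> Sdiag; have [_ orbit_i] := porbit_path_loop_perm.
have fixed x : x \notin p -> x \notin c -> orbit_weight s (porbit s x) = 1.
  move=> xp xc; apply: orbit_weight_fixed => //.
  by rewrite permE /path_loop_fun (negbTE xp) next_notin.
have off_path x : porbit s x != porbit s i -> x \notin p.
  by apply: contraNN => xp; apply/eqP/porbit_mem_eq; rewrite orbit_i.
rewrite /loops_weight; case Dc: c => [|c0 c'].
  by apply: big1 => _ /andP[/imsetP[x _ ->] ne]; rewrite fixed ?Dc ?off_path.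
have c0p : c0 \notin p by rewrite (disjointFr Dcp) // Dc mem_head.
have [Ec Tc Oc] : [/\ #|porbit s c0| = (size c').+1,
    traject s c0 (size c').+1 = c0 :: c' & porbit s c0 =i c0 :: c'].
  apply: porbit_next; rewrite -?Dc // => y yc.
  by rewrite permE /path_loop_fun (disjointFr Dcp yc).
have ne0 : porbit s c0 != porbit s i.
  by apply: contraNneq c0p => e; rewrite -orbit_i -e porbit_id.
rewrite (bigD1 (porbit s c0)) /=; last by rewrite ne0 andbT imset_f.
rewrite [X in _ * X]big1; first by rewrite mulr1 /orbit_weight -cycle_sign_porbit Ec Tc.
move=> _ /andP[/andP[/imsetP[x _ ->] ne] ne'].
apply: fixed; first by rewrite off_path.
by apply: contraNN ne' => xc; apply/eqP/porbit_mem_eq; rewrite Oc -Dc.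
Qed.

Hypothesis Lp : last i p' = j.

Lemma path_loop_perm_j : s j = i.
Proof.
have jp : j \in p by rewrite -Lp mem_last.
rewrite permE /path_loop_fun jp next_nth jp -Lp index_last -?Lp //.
by rewrite nth_default.
Qed.

Lemma perm_coef_path_loop_perm : (forall k, S k k = -1) ->
  coef s = - ((-1) ^+ N * (path_sign S p * if c is _ :: _ then - cycle_sign S c else 1)).
Proof.
move=> Sdiag; have [path_s _] := porbit_path_loop_perm.
rewrite perm_coefE ?path_loop_perm_j // loops_weight_path_loop_perm //.
by rewrite -(path_sign_perm_path path_loop_perm_j) path_s.
Qed.

End PathLoopPerm.

Hypothesis Sdiag : forall k, S k k = -1.
Local Notation sgN := ((-1) ^+ N : int).

Lemma perm_coef_path p : is_path S i j p -> exists r, coef r = - (sgN * path_sign S p).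
Proof.
case: p => // _ p' /and4P[/eqP-> /eqP Lp Up _].
have D0 : [disjoint [::] & i :: p'] by apply/pred0P.
by exists (path_loop_perm Up (erefl : uniq [::]) D0); rewrite perm_coef_path_loop_perm ?mulr1.
Qed.

Lemma perm_coef_path_loop p c : is_path S i j p -> is_feedback_loop S c ->
  cycle_sign S c = 1 -> [disjoint c & p] -> exists r, coef r = sgN * path_sign S p.
Proof.
case: p => // _ p' /and4P[/eqP-> /eqP Lp Up _] /and3P[c_gt1 Uc _] c_pos Dcp.
exists (path_loop_perm Up Uc Dcp); rewrite perm_coef_path_loop_perm //.
by case: c c_gt1 {Uc Dcp} c_pos => // c0 c' _ ->; rewrite mulrN1 mulrN opprK.
Qed.

Lemma perm_coef_no_loop r : (forall k l, sign_val (S k l)) ->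
  ~ positive_loop_off_path -> coef r != 0 ->
  coef r = - (sgN * path_sign S (perm_path r)).
Proof.
move=> sS noloop nz; have rj := perm_coef_neq0_j nz.
rewrite perm_coefE // (loops_weight1 Sdiag sS noloop nz) mulr1.
by rewrite (path_sign_perm_path rj).
Qed.

End PermutationsAndPaths.

Theorem lemma2 (m : nat) (S : 'I_m.+1 -> 'I_m.+1 -> int)
  (HS : forall k l, S k l \in [:: -1; 0; 1])
  (Hdiag : forall k, S k k = -1)
  (i j : 'I_m.+1) (hij : i != j) :
  (minor_del S i j = 0 <-> ~ (exists p, is_path S i j p)) /\
  ((exists p, is_path S i j p) ->
   (mixed_signs (minor_del S i j) <->
    (exists p1 p2, [/\ is_path S i j p1, is_path S i j p2, p1 != p2
                     & path_sign S p1 = - path_sign S p2])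
    \/ (exists c p, [/\ is_feedback_loop S c, cycle_sign S c = 1,
                       is_path S i j p & [disjoint c & p]]))).
Proof.
have path_coef_neq0 p : is_path S i j p -> - ((-1) ^+ m.+1 * path_sign S p) != 0.
  by move=> P; rewrite oppr_eq0 mulf_eq0 signr_eq0 (negbTE (path_sign_neq0 P)).
split.
  rewrite minor_del_eq0; split=> [coef0 [p P]|nopath r].
    have [r e] := perm_coef_path Hdiag P.
    by have := path_coef_neq0 p P; rewrite -e coef0 eqxx.
  by apply/eqP; apply: contraT => /is_path_perm_coef pr; case: nopath; exists (perm_path i r).
move=> _; rewrite minor_del_mixed; split=> [[[r1 pos] [r2 neg]]|].
  have [loop|noloop] := classic (positive_loop_off_path S i j); [by right|left].
  have e1 := perm_coef_no_loop Hdiag HS noloop (lt0r_neq0 pos).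
  have e2 := perm_coef_no_loop Hdiag HS noloop (ltr0_neq0 neg).
  exists (perm_path i r1), (perm_path i r2).
  split; rewrite ?is_path_perm_coef ?(lt0r_neq0 pos) ?(ltr0_neq0 neg) //.
    by apply: contraTneq pos => e12; rewrite -leNgt e1 e12 -e2 ltW.
  apply: sign_val_mul_lt0; rewrite ?sign_val_path_sign //.
  by move: neg; rewrite -(pmulr_rlt0 _ pos) e1 e2 mulrNN mulrACA -expr2 sqrr_sign mul1r.
case=> [[p1 [p2 [P1 P2 _ opp]]] | [c [p [loop pos P D]]]].
  have [r1 e1] := perm_coef_path Hdiag P1; have [r2 e2] := perm_coef_path Hdiag P2.
  apply: (@exists_pos_neg_opp _ _ (perm_coef S i j) r1 r2); rewrite e1 ?path_coef_neq0 //.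
  by rewrite e2 opp mulrN opprK.
have [r1 e1] := perm_coef_path Hdiag P.
have [r2 e2] := perm_coef_path_loop Hdiag P loop pos D.
apply: (@exists_pos_neg_opp _ _ (perm_coef S i j) r1 r2); rewrite e1 ?path_coef_neq0 //.
by rewrite e2 opprK.
Qed.
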